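(* Let $\delta<\mathfrak t$ be an ordinal and assume: (i) $\bar A=\langle A_i:i<\delta\rangle$ is a sequence of members of $[\omega]^{\aleph_0}$; (ii) $\langle B_n:n<\omega\rangle\subseteq[\omega]^{\aleph_0}$ is $\subseteq^*$-decreasing (i.e. $B_m\subseteq^*B_n$ for $n<m$); (iii) $A_i\cap B_n$ is infinite for every $i<\delta$ and $n<\omega$; (iv) for all $i<j<\delta$ there is $n<\omega$ with $A_j\cap B_n\subseteq^* A_i\cap B_n$. Then there is $A\in[\omega]^{\aleph_0}$ such that $A\subseteq^* A_i$ for all $i<\delta$ and $A\subseteq^* B_n$ for all $n<\omega$.
   Context: $[\omega]^{\aleph_0}$ is the set of infinite subsets of $\omega$; $A\subseteq^* B$ means $A\setminus B$ is finite. $\mathfrak t$ is the least $\kappa$ such that there is a sequence $\langle X_\alpha:\alpha<\kappa\rangle\subseteq[\omega]^{\aleph_0}$ with $X_\beta\subseteq^* X_\alpha$ for $\alpha<\beta<\kappa$ and no $X\in[\omega]^{\aleph_0}$ satisfying $X\subseteq^*X_\alpha$ for all $\alpha$. *)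

From Stdlib Require Import Arith Wellfounded.

Definition infinite (X : nat -> Prop) : Prop :=
  ~ (exists N, forall k, X k -> k < N).

Definition almost_sub (X Y : nat -> Prop) : Prop :=
  exists N, forall k, X k -> ~ Y k -> k < N.

Definition inter (X Y : nat -> Prop) : nat -> Prop := fun k => X k /\ Y k.

(* (T, lt) is a strict well-order: an ordinal up to isomorphism *)
Definition is_well_order {T : Type} (lt : T -> T -> Prop) : Prop :=
  well_founded lt /\
  (forall x y z, lt x y -> lt y z -> lt x z) /\
  (forall x y, lt x y \/ x = y \/ lt y x).

(* The order type of (T, lt) is < t: no ordinal <= it carries a
   subseteq^*-decreasing sequence of infinite sets without an infinite
   pseudo-intersection.  Ordinals <= the order type of T are represented by
   the downward-closed subsets I of T (initial segments, including T). *)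
Definition below_t {T : Type} (lt : T -> T -> Prop) : Prop :=
  forall I : T -> Prop,
    (forall i j, lt j i -> I i -> I j) ->
    forall X : T -> nat -> Prop,
      (forall i, I i -> infinite (X i)) ->
      (forall i j, I i -> I j -> lt i j -> almost_sub (X j) (X i)) ->
      exists Y, infinite Y /\ (forall i, I i -> almost_sub Y (X i)).

(* For an infinite set U let D_c(U) = {k | k ∈ B_m for all m <= |U ∩ k| + c},
   a diagonal intersection of the B_n along the counting function of U; it is almost
   contained in every B_n.  Call U good for S if S ∩ D_c(U) is infinite for every c.
   Goodness passes to almost-subsets (an almost-subset has only boundedly many more
   elements below each k, which the shift c absorbs), and every infinite set has a good infinite subset
   (thin it out until its counting function grows slower than the depth of the
   witnesses of (iii)).  Recursion along δ < t gives a ⊆*-decreasing sequence V_i with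
   V_i good for A_i; a pseudo-intersection U of it is good for every A_i.  By (iv) and
   D_0(U) ⊆* B_n, the sets A_i ∩ D_0(U) are then ⊆*-decreasing, and a
   pseudo-intersection of them, again available since δ < t, is the required set. *)

From Stdlib Require Import Arith.
From Stdlib Require Import Lia Classical ClassicalEpsilon FunctionalExtensionality.

Lemma infinite_unbounded (X : nat -> Prop) :
  infinite X -> forall N, exists k, N <= k /\ X k.
Proof.
  intros HX N. apply NNPP. intro Hno. apply HX. exists N. intros k Hk.
  destruct (Nat.lt_ge_cases k N) as [Hlt | Hge]; [exact Hlt |].
  exfalso. apply Hno. eauto.
Qed.

Lemma unbounded_infinite (X : nat -> Prop) :
  (forall N, exists k, N <= k /\ X k) -> infinite X.
Proof. intros HX [N HN]. destruct (HX N) as [k [Hk HXk]]. specialize (HN k HXk). lia. Qed.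

Lemma sub_almost_sub (X Y : nat -> Prop) : (forall k, X k -> Y k) -> almost_sub X Y.
Proof. intro HXY. exists 0. intros k HX HY. exfalso. auto. Qed.

Lemma almost_sub_trans (X Y Z : nat -> Prop) :
  almost_sub X Y -> almost_sub Y Z -> almost_sub X Z.
Proof.
  intros [M HM] [N HN]. exists (Nat.max M N). intros k HX HZ.
  destruct (classic (Y k)) as [HY | HY].
  - specialize (HN k HY HZ). lia.
  - specialize (HM k HX HY). lia.
Qed.

Lemma almost_sub_inter (X Y Z : nat -> Prop) :
  almost_sub X Y -> almost_sub X Z -> almost_sub X (inter Y Z).
Proof.
  intros [M HM] [N HN]. exists (Nat.max M N). intros k HX HYZ.
  destruct (classic (Y k)) as [HY | HY].
  - assert (HZ : ~ Z k) by (intro HZ; exact (HYZ (conj HY HZ))).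
    specialize (HN k HX HZ). lia.
  - specialize (HM k HX HY). lia.
Qed.

Lemma infinite_almost_sub (X Y : nat -> Prop) : almost_sub X Y -> infinite X -> infinite Y.
Proof.
  intros [M HM] HX [N HN]. apply HX. exists (Nat.max M N). intros k HXk.
  destruct (classic (Y k)) as [HY | HY].
  - specialize (HN k HY). lia.
  - specialize (HM k HXk HY). lia.
Qed.

Section WfRecursiveChoice.

Context {T U : Type} (lt : T -> T -> Prop) (Hwf : well_founded lt) (HU : inhabited U).
Variable P : forall j, (forall i, lt i j -> U) -> U -> Prop.
Hypothesis P_step : forall j (f : T -> U),
  (forall i, lt i j -> P i (fun k _ => f k) (f i)) -> exists u, P j (fun i _ => f i) u.

Lemma wf_recursive_choice : exists f : T -> U, forall j, P j (fun i _ => f i) (f j).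
Proof.
  set (step := fun j prev => epsilon HU (P j prev)).
  set (f := Fix Hwf (fun _ => U) step).
  assert (f_unfold : forall j, f j = step j (fun i _ => f i)).
  { intro j. apply (Fix_eq Hwf (fun _ => U) step). intros x g h Hgh.
    replace g with h; [reflexivity |].
    apply functional_extensionality_dep; intro y.
    apply functional_extensionality; intro Hy. symmetry. apply Hgh. }
  exists f. intro j. induction j as [j IH] using (well_founded_ind Hwf).
  rewrite (f_unfold j). apply epsilon_spec, P_step. exact IH.
Qed.

End WfRecursiveChoice.

Definition indicator (P : Prop) : nat := if excluded_middle_informative P then 1 else 0.

Fixpoint count_below (V : nat -> Prop) (k : nat) : nat :=
  match k with
  | 0 => 0
  | S k => count_below V k + indicator (V k)
  end.

Lemma indicator_true (P : Prop) : P -> indicator P = 1.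
Proof. intro HP. unfold indicator. destruct (excluded_middle_informative P); tauto. Qed.

Lemma indicator_false (P : Prop) : ~ P -> indicator P = 0.
Proof. intro HP. unfold indicator. destruct (excluded_middle_informative P); tauto. Qed.

Lemma count_below_mono (V : nat -> Prop) (k k' : nat) :
  k <= k' -> count_below V k <= count_below V k'.
Proof. induction 1 as [| k' _ IH]; simpl; lia. Qed.

Lemma count_below_almost_sub (U V : nat -> Prop) :
  almost_sub U V -> exists M, forall k, count_below U k <= count_below V k + M.
Proof.
  intros [M HM]. exists M.
  enough (Hmin : forall k, count_below U k <= count_below V k + Nat.min k M).
  { intro k. specialize (Hmin k). lia. }
  induction k as [| k IH]; cbn [count_below]; [lia |].
  destruct (classic (U k)) as [HUk | HUk]; [| rewrite (indicator_false _ HUk); lia].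
  rewrite (indicator_true _ HUk).
  destruct (classic (V k)) as [HVk | HVk].
  - rewrite (indicator_true _ HVk). lia.
  - specialize (HM k HUk HVk). lia.
Qed.

Lemma count_below_unbounded (V : nat -> Prop) :
  infinite V -> forall c, exists K, forall k, K <= k -> c <= count_below V k.
Proof.
  intros HV c. induction c as [| c [K HK]]; [exists 0; lia |].
  destruct (infinite_unbounded V HV K) as [v [HKv HVv]].
  exists (S v). intros k Hk.
  pose proof (count_below_mono V (S v) k Hk) as Hmono. simpl in Hmono.
  rewrite (indicator_true _ HVv) in Hmono. specialize (HK v HKv). lia.
Qed.

Lemma strict_mono_succ (y : nat -> nat) :
  (forall t, y t < y (S t)) -> forall u v, u < v -> y u < y v.
Proof.
  intros Hy u v Huv. induction Huv as [| v _ IH]; [apply Hy |].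
  specialize (Hy v). lia.
Qed.

Lemma count_below_range (y : nat -> nat) :
  (forall u v, u < v -> y u < y v) ->
  forall k t, k <= y t -> count_below (fun x => exists u, y u = x) k <= t.
Proof.
  intros Hy k. induction k as [| k IH]; intros t Hk; simpl; [lia |].
  destruct (classic (exists u, y u = k)) as [[u Hu] | Hk_range].
  - rewrite indicator_true by eauto.
    assert (Hut : u < t).
    { destruct (Nat.lt_ge_cases u t) as [Hlt | Hge]; [exact Hlt |].
      destruct (Nat.eq_dec t u) as [-> | Hne]; [lia |].
      specialize (Hy t u ltac:(lia)). lia. }
    specialize (IH u ltac:(lia)). lia.
  - rewrite (indicator_false _ Hk_range), Nat.add_0_r. apply IH. lia.
Qed.

(* An increasing enumeration of a subset of [Y] (via [g]) whose t-th element lies above the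
   witness [s t]; so at most t of its elements lie below [s t]. *)
Fixpoint sparse_enum (g s : nat -> nat) (t : nat) : nat :=
  match t with
  | 0 => g (s 0)
  | S t => g (Nat.max (s (S t)) (S (sparse_enum g s t)))
  end.

Lemma sparse_enum_spec (Y : nat -> Prop) (g s : nat -> nat) :
  (forall n, n <= g n /\ Y (g n)) ->
  forall t, s t <= sparse_enum g s t /\ Y (sparse_enum g s t) /\
            sparse_enum g s t < sparse_enum g s (S t).
Proof.
  intros Hg t. split; [| split].
  - destruct t as [| t]; simpl; [apply Hg |].
    destruct (Hg (Nat.max (s (S t)) (S (sparse_enum g s t)))). lia.
  - destruct t; apply Hg.
  - change (sparse_enum g s (S t)) with (g (Nat.max (s (S t)) (S (sparse_enum g s t)))).
    destruct (Hg (Nat.max (s (S t)) (S (sparse_enum g s t)))). lia.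
Qed.

Section DiagonalIntersection.

Variable B : nat -> nat -> Prop.
Hypothesis B_decr : forall n, almost_sub (B (S n)) (B n).

Definition Bcap (m k : nat) : Prop := forall l, l <= m -> B l k.

Definition diag (U : nat -> Prop) (c k : nat) : Prop := Bcap (count_below U k + c) k.

Definition good (S V : nat -> Prop) : Prop := forall c, infinite (inter S (diag V c)).

Lemma almost_sub_Bcap (m : nat) : almost_sub (B m) (Bcap m).
Proof.
  induction m as [| m IH].
  - apply sub_almost_sub. intros k HB l Hl. replace l with 0 by lia. exact HB.
  - apply almost_sub_trans with (inter (Bcap m) (B (S m))).
    + apply almost_sub_inter; [| apply sub_almost_sub; auto].
      apply almost_sub_trans with (B m); [apply B_decr | exact IH].
    + apply sub_almost_sub. intros k [Hcap HB] l Hl.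
      destruct (Nat.eq_dec l (S m)) as [-> | Hne]; [exact HB | apply Hcap; lia].
Qed.

Lemma infinite_inter_Bcap (S : nat -> Prop) (m : nat) :
  infinite (inter S (B m)) -> infinite (inter S (Bcap m)).
Proof.
  apply infinite_almost_sub, almost_sub_inter.
  - apply sub_almost_sub. intros k []. assumption.
  - apply almost_sub_trans with (B m); [apply sub_almost_sub; intros k []; auto |].
    apply almost_sub_Bcap.
Qed.

Lemma diag_almost_sub (U : nat -> Prop) (c n : nat) :
  infinite U -> almost_sub (diag U c) (B n).
Proof.
  intro HU. destruct (count_below_unbounded U HU n) as [K HK].
  exists K. intros k Hdiag HBn.
  destruct (Nat.lt_ge_cases k K) as [Hlt | Hge]; [exact Hlt |].
  exfalso. apply HBn, Hdiag. specialize (HK k Hge). lia.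
Qed.

Lemma good_almost_sub (S U V : nat -> Prop) : good S V -> almost_sub U V -> good S U.
Proof.
  intros HV HUV c. destruct (count_below_almost_sub U V HUV) as [M HM].
  apply infinite_almost_sub with (inter S (diag V (c + M))); [| apply HV].
  apply sub_almost_sub. intros k [HS Hdiag]. split; [exact HS |].
  intros l Hl. apply Hdiag. specialize (HM k). lia.
Qed.

Lemma good_thin (S : nat -> Prop) :
  (forall m, infinite (inter S (B m))) ->
  forall Y, infinite Y -> exists V, infinite V /\ (forall k, V k -> Y k) /\ good S V.
Proof.
  intros HS Y HY.
  destruct (choice (fun t k => t <= k /\ S k /\ Bcap (2 * t) k)) as [s Hs].
  { intro t. destruct (infinite_unbounded _ (infinite_inter_Bcap S (2 * t) (HS (2 * t))) t)
      as [k [Htk [HSk Hcap]]]. eauto. }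
  destruct (choice (fun n k => n <= k /\ Y k) (infinite_unbounded Y HY)) as [g Hg].
  pose proof (sparse_enum_spec Y g s Hg) as Henum.
  set (y := sparse_enum g s) in Henum.
  assert (Hy : forall u v, u < v -> y u < y v) by (apply strict_mono_succ; apply Henum).
  exists (fun x => exists u, y u = x). repeat split.
  - apply unbounded_infinite. intro N. exists (y N). split; [| eauto].
    destruct (Henum N), (Hs N). lia.
  - intros x [u <-]. apply Henum.
  - intro c. apply unbounded_infinite. intro N.
    destruct (Hs (c + N)) as [HNk [HSk Hcap]].
    exists (s (c + N)). split; [lia |]. split; [exact HSk |].
    intros l Hl. apply Hcap.
    pose proof (count_below_mono (fun x => exists u, y u = x) _ _ (proj1 (Henum (c + N)))).
    pose proof (count_below_range y Hy (y (c + N)) (c + N) (le_n _)). lia.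
Qed.

Lemma decreasing_pseudo_intersection :
  (forall m, infinite (B m)) -> exists X, infinite X /\ forall n, almost_sub X (B n).
Proof.
  intro HB.
  destruct (good_thin (fun _ => True)) with (Y := fun _ : nat => True)
    as [V [HV [_ Hgood]]].
  - intro m. apply infinite_almost_sub with (B m); [| apply HB].
    apply sub_almost_sub. split; auto.
  - apply unbounded_infinite. intro N. exists N. auto.
  - exists (inter (fun _ => True) (diag V 0)). split; [apply Hgood |].
    intro n. apply almost_sub_trans with (diag V 0); [| apply diag_almost_sub, HV].
    apply sub_almost_sub. intros k []. assumption.
Qed.

End DiagonalIntersection.

Section Tower.

Context {T : Type} (lt : T -> T -> Prop) (Hwo : is_well_order lt) (Ht : below_t lt).
Variables (A : T -> nat -> Prop) (B : nat -> nat -> Prop).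
Hypothesis B_decr : forall n, almost_sub (B (S n)) (B n).
Hypothesis AB_infinite : forall i n, infinite (inter (A i) (B n)).

Lemma good_tower : exists V : T -> nat -> Prop, forall j,
  infinite (V j) /\ good B (A j) (V j) /\ forall i, lt i j -> almost_sub (V j) (V i).
Proof.
  destruct Hwo as [Hwf [Htrans _]].
  destruct (wf_recursive_choice lt Hwf (inhabits (fun _ : nat => True))
    (fun j prev W => infinite W /\ good B (A j) W /\
                     forall i (h : lt i j), almost_sub W (prev i h))) as [V HV].
  - intros j f IH.
    destruct (Ht (fun i => lt i j)) with (X := f) as [Y [HY HYf]].
    + intros a b Hba Ha. exact (Htrans b a j Hba Ha).
    + intros i Hi. apply (IH i Hi).
    + intros i i' _ Hi' Hlt. apply (IH i' Hi'). exact Hlt.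
    + destruct (good_thin B B_decr (A j) (AB_infinite j) Y HY) as [W [HW [HWY Hgood]]].
      exists W. repeat split; [exact HW | exact Hgood |]. intros i Hi.
      apply almost_sub_trans with Y; [apply sub_almost_sub, HWY | apply HYf, Hi].
  - exists V. intro j. destruct (HV j) as [HVj [Hgood Hdec]]. repeat split; auto.
Qed.

Lemma good_pseudo_intersection : exists U, infinite U /\ forall j, good B (A j) U.
Proof.
  destruct good_tower as [V HV].
  destruct (Ht (fun _ => True)) with (X := V) as [U [HU HUV]].
  - auto.
  - intros i _. apply HV.
  - intros i i' _ _ Hlt. apply (HV i'), Hlt.
  - exists U. split; [exact HU |]. intro j.
    apply good_almost_sub with (V j); [apply HV | apply HUV; auto].
Qed.

Hypothesis A_iv : forall i j, lt i j ->
  exists n, almost_sub (inter (A j) (B n)) (inter (A i) (B n)).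

Lemma tower_pseudo_intersection (j0 : T) : exists X : nat -> Prop, infinite X /\
  (forall i, almost_sub X (A i)) /\ (forall n, almost_sub X (B n)).
Proof.
  destruct good_pseudo_intersection as [U [HU Hgood]].
  set (W := fun j => inter (A j) (diag B U 0)).
  assert (HW_fst : forall j, almost_sub (W j) (A j)) by
    (intro j; apply sub_almost_sub; intros k []; assumption).
  assert (HW_snd : forall j n, almost_sub (W j) (B n)).
  { intros j n. apply almost_sub_trans with (diag B U 0); [| apply diag_almost_sub, HU].
    apply sub_almost_sub. intros k []. assumption. }
  destruct (Ht (fun _ => True)) with (X := W) as [X [HX HXW]].
  - auto.
  - intros i _. apply Hgood.
  - intros i j _ _ Hij. destruct (A_iv i j Hij) as [n Hn].
    apply almost_sub_inter.
    + apply almost_sub_trans with (inter (A j) (B n)); [apply almost_sub_inter; auto |].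
      apply almost_sub_trans with (inter (A i) (B n)); [exact Hn |].
      apply sub_almost_sub. intros k []. assumption.
    + apply sub_almost_sub. intros k []. assumption.
  - exists X. split; [exact HX | split].
    + intro i. apply almost_sub_trans with (W i); auto.
    + intro n. apply almost_sub_trans with (W j0); auto.
Qed.

End Tower.

Theorem lemma2p4 (T : Type) (lt : T -> T -> Prop)
  (Hwo : is_well_order lt) (Ht : below_t lt)
  (A : T -> nat -> Prop) (B : nat -> nat -> Prop)
  (HA : forall i, infinite (A i))
  (HB : forall n, infinite (B n))
  (HBdec : forall n m, n < m -> almost_sub (B m) (B n))
  (HAB : forall i n, infinite (inter (A i) (B n)))
  (Hiv : forall i j, lt i j ->
          exists n, almost_sub (inter (A j) (B n)) (inter (A i) (B n))) :
  exists X : nat -> Prop, infinite X /\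
    (forall i, almost_sub X (A i)) /\ (forall n, almost_sub X (B n)).
Proof.
  assert (B_decr : forall n, almost_sub (B (S n)) (B n))
    by (intro n; apply HBdec; lia).
  destruct (classic (inhabited T)) as [[j0] | Hempty].
  - exact (tower_pseudo_intersection lt Hwo Ht A B B_decr HAB Hiv j0).
  - destruct (decreasing_pseudo_intersection B B_decr HB) as [X [HX HXB]].
    exists X. repeat split; [exact HX | | exact HXB].
    intro i. exfalso. exact (Hempty (inhabits i)).
Qed.
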